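(* Let $H$ be a hypergraph and let $Y \subseteq \bigcup H$ be dispensable in $H$. Then for every $Z\subseteq \bigcup H$: $Z$ is dispensable in $H$ if and only if $Z$ is dispensable in $H\cup\{Y\}$.
   Context: A hypergraph is a finite set $H$ of nonempty subsets of some finite set; its carrier is $\bigcup H$ (the union of its members), and $H$ is called a hypergraph on $\bigcup H$. The empty family $\emptyset$ is the empty hypergraph. For a family $F$ of sets and a set $Y$, let $F_Y=\{X\in F\mid X\subseteq Y\}$. A hypergraph partition of a hypergraph $H$ is a partition $\{H_1,\dots,H_n\}$ ($n\ge 0$, blocks nonempty) of the set $H$ such that $\{\bigcup H_1,\dots,\bigcup H_n\}$ is a partition of $\bigcup H$. A hypergraph is connected if it has exactly one hypergraph partition (for nonempty $H$: the graph whose vertices are the members of $H$, two being adjacent when they intersect, is connected). A subset $Y$ of $\bigcup H$ is dispensable in $H$ when $H_Y\setminus\{Y\}$ is a connected hypergraph whose carrier is exactly $Y$. *)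

From mathcomp Require Import all_boot.
Set Implicit Arguments. Unset Strict Implicit. Unset Printing Implicit Defensive.

Definition hypergraph (T : finType) (H : {set {set T}}) : Prop := set0 \notin H.

Definition carrier (T : finType) (H : {set {set T}}) : {set T} := cover H.

Definition restr (T : finType) (F : {set {set T}}) (Y : {set T}) : {set {set T}} :=
  [set X in F | X \subset Y].

(* A hypergraph partition of H: a partition P of the set H (nonempty blocks)
   such that the family of unions of the blocks (indexed by P) is a partition
   of the carrier of H. *)
Definition hyp_partition (T : finType) (H : {set {set T}})
    (P : {set {set {set T}}}) : Prop :=
  partition P H /\
  {in P &, injective (fun B => cover B)} /\
  partition [set cover B | B in P] (cover H).

Definition connected (T : finType) (H : {set {set T}}) : Prop :=
  exists P, hyp_partition H P /\ forall Q, hyp_partition H Q -> Q = P.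

Definition dispensable (T : finType) (H : {set {set T}}) (Y : {set T}) : Prop :=
  Y \subset carrier H /\
  connected (restr H Y :\ Y) /\ carrier (restr H Y :\ Y) = Y.

From mathcomp Require Import all_boot.
Set Implicit Arguments. Unset Strict Implicit. Unset Printing Implicit Defensive.

(* A family F with nonempty union is connected exactly when no set S splits
   it: if every member of F lies in S or in ~: S, then so does cover F.  In
   this form connectedness is insensitive to adding the union of a connected
   subfamily of F, as that union cannot straddle a set S that no member of F
   straddles.  Passing from H to Y |: H changes Z's family H_Z \ {Z} only when
   Y is a proper subset of Z, and then it adds exactly Y, the union of the
   connected family H_Y \ {Y}, which is itself part of H_Z \ {Z}. *)

Lemma partition_set2 (U : finType) (A B : {set U}) :
  A != set0 -> B != set0 -> [disjoint A & B] -> partition [set A; B] (A :|: B).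
Proof.
move=> A0 B0 dAB; apply: partitionU1 => //.
by rewrite /partition cover1 eqxx trivIset1 inE eq_sym B0.
Qed.

Lemma disjoint_sub_eq0 (U : finType) (A B : {set U}) :
  A \subset B -> [disjoint A & B] -> A = set0.
Proof. by move=> /setIidPl AB /disjoint_setI0; rewrite AB. Qed.

Section CoverConnected.
Variable T : finType.
Implicit Types (F G L : {set {set T}}) (S X W : {set T}).

Lemma cover_setU F G : cover (F :|: G) = cover F :|: cover G.
Proof. exact: bigcup_setU. Qed.

Lemma cover_set1U X F : cover (X |: F) = X :|: cover F.
Proof. by rewrite cover_setU cover1. Qed.

Lemma cover_setID F G : cover (F :&: G) :|: cover (F :\: G) = cover F.
Proof. by rewrite -cover_setU setID. Qed.

Lemma cover_set0 : cover (set0 : {set {set T}}) = set0.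
Proof. exact: big_set0. Qed.

Lemma coverS F G : F \subset G -> cover F \subset cover G.
Proof. by move=> sFG; apply/bigcupsP=> W /(subsetP sFG) WG; apply: bigcup_sup. Qed.

Lemma disjoint_setID F G : [disjoint F :&: G & F :\: G].
Proof. by rewrite disjoints_subset setDE setCI setCK subsetU // subsetIr orbT. Qed.

Definition cover_connected F := forall S,
  {in F, forall W, (W \subset S) || (W \subset ~: S)} ->
  (cover F \subset S) || (cover F \subset ~: S).

Lemma cover_connected_set1U F L : L \subset F -> cover_connected L ->
  cover_connected (cover L |: F) <-> cover_connected F.
Proof.
move=> sLF connL; have coverLF : cover (cover L |: F) = cover F.
  by rewrite cover_set1U; apply/setUidPr/coverS.
rewrite /cover_connected coverLF; split=> connF S splitF.
- apply: connF => W /setU1P[->|WF]; last exact: splitF.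
  by apply: connL => W' W'L; apply: splitF; apply: (subsetP sLF).
- by apply: connF => W WF; apply: splitF; rewrite setU1r.
Qed.

Lemma hyp_partition_set1 F : cover F != set0 -> hyp_partition F [set F].
Proof.
move=> F0; have F0' : F != set0 by apply: contraNneq F0 => ->; rewrite cover_set0.
split; [|split].
- by rewrite /partition cover1 eqxx trivIset1 inE eq_sym F0'.
- by move=> A B /set1P-> /set1P->.
- by rewrite imset_set1 /partition cover1 eqxx trivIset1 inE eq_sym F0.
Qed.

Lemma hyp_partition_setID F G :
  cover (F :&: G) != set0 -> cover (F :\: G) != set0 ->
  [disjoint cover (F :&: G) & cover (F :\: G)] ->
  hyp_partition F [set F :&: G; F :\: G].
Proof.
move=> FG0 FnG0 dFG.
have neq0 (B : {set {set T}}) : cover B != set0 -> B != set0.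
  by apply: contraNneq => ->; rewrite cover_set0.
have neqFG : cover (F :&: G) != cover (F :\: G).
  apply: contraNneq FG0 => eqFG; apply/eqP/(disjoint_sub_eq0 _ dFG).
  by rewrite eqFG.
split; [|split].
- rewrite -[X in partition _ X](setID F G).
  by apply: partition_set2; rewrite ?neq0 ?disjoint_setID.
- move=> A B; rewrite !inE => /orP[]/eqP-> /orP[]/eqP-> // /eqP;
  by rewrite ?(negbTE neqFG) // eq_sym (negbTE neqFG).
- by rewrite imsetU1 imset_set1 -(cover_setID F G); apply: partition_set2.
Qed.

Section HypPartitionBlocks.
Variables (F : {set {set T}}) (Q : {set {set {set T}}}).
Hypothesis hQ : hyp_partition F Q.

Lemma hyp_partition_cover_neq0 B : B \in Q -> cover B != set0.
Proof.
case: hQ => _ [_ /partition_neq0 cQ] BQ; exact/cQ/imset_f.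
Qed.

Lemma hyp_partition_disjoint B B' : B \in Q -> B' \in Q -> B != B' ->
  [disjoint cover B & cover B'].
Proof.
case: hQ => _ [injQ /partition_trivIset/trivIsetP tQ] BQ B'Q neqB.
by apply: tQ; rewrite ?imset_f //; apply: contra neqB => /eqP/injQ->.
Qed.

Lemma hyp_partition_block W : W \in F -> exists2 B, B \in Q & W \in B.
Proof. by case: hQ => /cover_partition cQ _; rewrite -cQ => /bigcupP. Qed.

Lemma hyp_partition_subset B : B \in Q -> B \subset F.
Proof. by case: hQ => pQ _; apply: partitionS pQ. Qed.

End HypPartitionBlocks.

Lemma connected_cover_connected F : connected F -> cover_connected F.
Proof.
move=> [P [_ uniqP]] S splitF; pose G := [set W : {set T} | W \subset S].
have coverFG : cover (F :&: G) \subset S.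
  by apply/bigcupsP=> W; rewrite !inE => /andP[_].
have coverFnG : cover (F :\: G) \subset ~: S.
  apply/bigcupsP=> W; rewrite !inE => /andP[WnS WF].
  by move: (splitF W WF); rewrite (negbTE WnS).
have dFG : [disjoint cover (F :&: G) & cover (F :\: G)].
  by rewrite disjoints_subset (subset_trans coverFG) // -{1}[S]setCK setCS.
rewrite -(cover_setID F G).
have [->|FG0] := eqVneq (cover (F :&: G)) set0; first by rewrite set0U coverFnG orbT.
have [->|FnG0] := eqVneq (cover (F :\: G)) set0; first by rewrite setU0 coverFG.
have F0 : cover F != set0 by rewrite -(cover_setID F G) setU_eq0 negb_and FG0.
have /setP eqPF := uniqP _ (hyp_partition_setID FG0 FnG0 dFG).
rewrite -(uniqP _ (hyp_partition_set1 F0)) in eqPF.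
have FGF : F :&: G = F by apply/set1P; rewrite -eqPF setU11.
have FnGF : F :\: G = F by apply/set1P; rewrite -eqPF !inE eqxx orbT.
move: dFG; rewrite FGF FnGF => /(disjoint_sub_eq0 (subxx _))/eqP.
by rewrite (negbTE F0).
Qed.

Lemma cover_connected_connected F :
  cover F != set0 -> cover_connected F -> connected F.
Proof.
move=> F0 connF; exists [set F]; split=> [|Q hQ]; first exact: hyp_partition_set1.
have [B BQ] : exists B, B \in Q.
  case/set0Pn: F0 => x /bigcupP[W /(hyp_partition_block hQ)[B BQ _] _].
  by exists B.
have splitF : {in F, forall W, (W \subset cover B) || (W \subset ~: cover B)}.
  move=> W /(hyp_partition_block hQ)[B' B'Q WB'].
  have [<-|neqB] := eqVneq B' B; first by rewrite bigcup_sup.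
  apply/orP; right; rewrite -disjoints_subset.
  exact: disjointWl (bigcup_sup _ WB') (hyp_partition_disjoint hQ B'Q BQ neqB).
have coverFB : cover F \subset cover B.
  case/orP: (connF _ splitF) => // FnB; case/negP: (hyp_partition_cover_neq0 hQ BQ).
  apply/eqP/(disjoint_sub_eq0 (subxx _)); rewrite disjoints_subset.
  exact: subset_trans (coverS (hyp_partition_subset hQ BQ)) FnB.
have QB : Q = [set B].
  apply/setP=> B'; rewrite inE; apply/idP/eqP=> [B'Q|->//].
  apply/eqP; apply: contraNT (hyp_partition_cover_neq0 hQ B'Q) => neqB.
  apply/eqP/(disjoint_sub_eq0 _ (hyp_partition_disjoint hQ B'Q BQ neqB)).
  exact: subset_trans (coverS (hyp_partition_subset hQ B'Q)) coverFB.
by case: hQ => /cover_partition; rewrite QB cover1 => ->.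
Qed.

Lemma connected_set1U F L : L \subset F -> connected L -> cover F != set0 ->
  connected (cover L |: F) <-> connected F.
Proof.
move=> sLF /connected_cover_connected connL F0.
have coverLF : cover (cover L |: F) != set0.
  by rewrite cover_set1U setU_eq0 negb_and F0 orbT.
split=> /connected_cover_connected connF.
  exact/(cover_connected_connected F0)/(cover_connected_set1U sLF connL).
exact/(cover_connected_connected coverLF)/(cover_connected_set1U sLF connL).
Qed.
End CoverConnected.

Lemma restrD1_set1U (T : finType) (H : {set {set T}}) (Y Z : {set T}) :
  restr (Y |: H) Z :\ Z =
  if Y \proper Z then Y |: (restr H Z :\ Z) else restr H Z :\ Z.
Proof.
apply/setP=> W; rewrite /restr; case: (eqVneq W Y) => [->|neWY].
  case: ifP => ltYZ; rewrite !inE eqxx -properEneq ltYZ //.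
  by rewrite andbCA -properEneq ltYZ andbF.
by case: ifP => _; rewrite !inE (negbTE neWY).
Qed.

Lemma restrD1S (T : finType) (H : {set {set T}}) (Y Z : {set T}) :
  Y \subset Z -> restr H Y :\ Y \subset restr H Z :\ Z.
Proof.
move=> sYZ; apply/subsetP=> W; rewrite !inE => /and3P[neWY WH sWY].
rewrite WH (subset_trans sWY sYZ) !andbT; apply: contraNneq neWY => eqWZ.
by rewrite eqEsubset sWY eqWZ.
Qed.

Theorem proposition4p2 (T : finType) (H : {set {set T}}) (Y : {set T}) :
  hypergraph H ->
  Y \subset carrier H ->
  dispensable H Y ->
  forall Z : {set T}, Z \subset carrier H ->
    (dispensable H Z <-> dispensable (Y |: H) Z).
Proof.
move=> _ YH [_ [connL coverL]] Z _.
have carrierYH : carrier (Y |: H) = carrier H.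
  by rewrite /carrier cover_set1U; apply/setUidPr.
rewrite /dispensable carrierYH restrD1_set1U; case: ifP => // ltYZ.
set K := restr H Z :\ Z; set L := restr H Y :\ Y in connL coverL.
have sLK : L \subset K by apply/restrD1S/proper_sub.
have coverYK : cover (Y |: K) = cover K.
  by rewrite cover_set1U; apply/setUidPr; rewrite -coverL coverS.
have Z0 : Z != set0 by rewrite -proper0 (sub_proper_trans (sub0set Y)).
rewrite /carrier in coverL *; rewrite coverYK -coverL.
have connKE : cover K = Z -> connected (cover L |: K) <-> connected K.
  by move=> coverK; apply: connected_set1U; rewrite ?coverK.
by split=> -[sZH [connK coverK]]; do !split=> //; apply/(connKE coverK).
Qed.
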